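(* Let $K>0$, $\gamma\geq2$, $\bar\rho>0$, $R>0$, and let $(\rho,u)$ be a $C^1$ solution on $\mathbb{R}$ of the one-dimensional Euler equations $$\rho_t+(\rho u)_x=0,\qquad \rho(u_t+uu_x)+P_x=0,\qquad P=K\rho^\gamma,$$ with initial data $(\rho(0,x),u(0,x))=(\bar\rho+\rho_0(x),u_0(x))$, $\operatorname{supp}(\rho_0,u_0)\subseteq\{x:|x|\leq R\}$, and with $\rho>0$ (non-vacuum). Let $\sigma=\sqrt{K\gamma\bar\rho^{\gamma-1}}$ and define $$H_4(t)=\int_{-\infty}^{+\infty}xu(t,x)\,dx,\qquad m_2(t)=\int_{-\infty}^{+\infty}(\rho(t,x)-\bar\rho)\,dx.$$ If $H_4(0)>\frac{8\sigma R^2}{3}$ and $m_2(0)\geq0$, then the $C^1$ solution blows up in finite time, i.e. its life span is finite. *)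

From Stdlib Require Import Reals Lra.
From Coquelicot Require Import Coquelicot.
Open Scope R_scope.

Definition cont_half (f : R -> R -> R) (t0 x0 : R) : Prop :=
  filterlim (fun p : R * R => f (fst p) (snd p))
            (within (fun p : R * R => 0 <= fst p) (locally (t0, x0)))
            (locally (f t0 x0)).

Definition dt (f : R -> R -> R) (t x : R) : R := Derive (fun s => f s x) t.
Definition dx (f : R -> R -> R) (t x : R) : R := Derive (fun y => f t y) x.

Definition C1_half (f : R -> R -> R) : Prop :=
  (forall t x, 0 <= t -> ex_derive (fun y => f t y) x) /\
  (forall t x, 0 < t -> ex_derive (fun s => f s x) t) /\
  (forall t x, 0 <= t -> cont_half f t x) /\
  (forall t x, 0 <= t -> cont_half (dx f) t x) /\
  (exists ft : R -> R -> R,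
      (forall t x, 0 < t -> ft t x = dt f t x) /\
      (forall t x, 0 <= t -> cont_half ft t x)).

Definition global_C1_euler_solution (K gamma : R) (rho u : R -> R -> R) : Prop :=
  C1_half rho /\ C1_half u /\
  (forall t x, 0 <= t -> 0 < rho t x) /\
  (forall t x, 0 < t ->
     dt rho t x + Derive (fun y => rho t y * u t y) x = 0) /\
  (forall t x, 0 < t ->
     rho t x * (dt u t x + u t x * dx u t x)
     + Derive (fun y => K * Rpower (rho t y) gamma) x = 0).

(* Along the Riemann invariants [w = u +- (g(rho) - g(rhobar))] the solution satisfies
   transport equations whose characteristic speeds are [+- sigma] at rest.  An energy
   estimate for [w] on shrinking trapezoids, run as a continuous induction in time,
   shows that the perturbation stays supported in [|x| <= R + sigma t].  On that
   support the mass [m_2] is conserved and the momentum equation gives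
   [H_4' = int (u^2/2 + h(rho) - h(rhobar))], which by convexity of the enthalpy
   ([gamma >= 2]) and [m_2 >= 0] is at least [int u^2 / 2].  Cauchy-Schwarz on the
   support gives [H_4^2 <= 2 (R + sigma t)^3 / 3 * int u^2], hence the Riccati
   inequality [H_4' >= 3 H_4^2 / (4 (R + sigma t)^3)], which has no global solution
   once [H_4(0) > 8 sigma R^2 / 3]. *)

From Stdlib Require Import Reals Lra Classical.
From Coquelicot Require Import Coquelicot.
Open Scope R_scope.

(** * Elementary real analysis *)

Lemma RInt_plusR (f g : R -> R) a b : ex_RInt f a b -> ex_RInt g a b ->
  RInt (fun x => f x + g x) a b = RInt f a b + RInt g a b.
Proof. intros; apply (RInt_plus (V := R_CompleteNormedModule)); auto. Qed.

Lemma RInt_minusR (f g : R -> R) a b : ex_RInt f a b -> ex_RInt g a b ->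
  RInt (fun x => f x - g x) a b = RInt f a b - RInt g a b.
Proof. intros; apply (RInt_minus (V := R_CompleteNormedModule)); auto. Qed.

Lemma RInt_scalR (f : R -> R) c a b : ex_RInt f a b ->
  RInt (fun x => c * f x) a b = c * RInt f a b.
Proof. intros; apply (RInt_scal (V := R_CompleteNormedModule)); auto. Qed.

Lemma RInt_extR (f g : R -> R) a b :
  (forall x, Rmin a b < x < Rmax a b -> f x = g x) -> RInt f a b = RInt g a b.
Proof. apply RInt_ext. Qed.

Lemma RInt_constR (c a b : R) : RInt (fun _ => c) a b = (b - a) * c.
Proof. apply (RInt_const (V := R_CompleteNormedModule)). Qed.

Lemma RInt_ChaslesR (f : R -> R) a b c : ex_RInt f a b -> ex_RInt f b c ->
  RInt f a b + RInt f b c = RInt f a c.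
Proof. intros; apply (RInt_Chasles (V := R_CompleteNormedModule)); auto. Qed.

Lemma ex_RInt_cont (f : R -> R) a b : (forall y, continuity_pt f y) -> ex_RInt f a b.
Proof.
intros H. apply (@ex_RInt_continuous R_CompleteNormedModule).
intros z _. apply continuity_pt_filterlim; auto.
Qed.

Lemma RInt_primitive (F f : R -> R) a b :
  (forall y, Rmin a b <= y <= Rmax a b -> is_derive F y (f y)) ->
  (forall y, continuity_pt f y) -> RInt f a b = F b - F a.
Proof.
intros H1 H2. apply (is_RInt_unique (V := R_CompleteNormedModule)).
apply (is_RInt_derive (V := R_CompleteNormedModule)); auto.
intros; apply continuity_pt_filterlim; auto.
Qed.

Lemma RInt_eq0 (f : R -> R) a b :
  (forall x, Rmin a b < x < Rmax a b -> f x = 0) -> RInt f a b = 0.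
Proof. intros H. rewrite (RInt_extR f (fun _ => 0)) by auto. rewrite RInt_constR. apply Rmult_0_r. Qed.

Lemma is_derive_plusR (f g : R -> R) x a b : is_derive f x a -> is_derive g x b ->
  is_derive (fun y => f y + g y) x (a + b).
Proof. intros; apply (is_derive_plus f g); auto. Qed.

Lemma is_derive_minusR (f g : R -> R) x a b : is_derive f x a -> is_derive g x b ->
  is_derive (fun y => f y - g y) x (a - b).
Proof. intros; apply (is_derive_minus f g); auto. Qed.

Lemma is_derive_multR (f g : R -> R) x a b : is_derive f x a -> is_derive g x b ->
  is_derive (fun y => f y * g y) x (a * g x + f x * b).
Proof. intros; apply (is_derive_mult f g); auto. intros; apply Rmult_comm. Qed.

Lemma is_derive_scalR (f : R -> R) c x a : is_derive f x a ->
  is_derive (fun y => c * f y) x (c * a).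
Proof. intros; apply (is_derive_scal f); auto. Qed.

Lemma is_derive_compR (f g : R -> R) x df dg : is_derive f (g x) df -> is_derive g x dg ->
  is_derive (fun y => f (g y)) x (dg * df).
Proof. intros; apply (is_derive_comp f g); auto. Qed.

Lemma is_derive_constR (c x : R) : is_derive (fun _ => c) x 0.
Proof. apply (is_derive_const c). Qed.

Lemma is_derive_idR (x : R) : is_derive (fun y => y) x 1.
Proof. apply (is_derive_id x). Qed.

Lemma is_derive_val (f : R -> R) (x a b : R) : is_derive f x a -> a = b -> is_derive f x b.
Proof. intros H <-; exact H. Qed.

Lemma continuity_pt_plusR (f g : R -> R) x :
  continuity_pt f x -> continuity_pt g x -> continuity_pt (fun y => f y + g y) x.
Proof. intros; apply continuity_pt_plus; auto. Qed.

Lemma continuity_pt_minusR (f g : R -> R) x :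
  continuity_pt f x -> continuity_pt g x -> continuity_pt (fun y => f y - g y) x.
Proof. intros; apply continuity_pt_minus; auto. Qed.

Lemma continuity_pt_multR (f g : R -> R) x :
  continuity_pt f x -> continuity_pt g x -> continuity_pt (fun y => f y * g y) x.
Proof. intros; apply continuity_pt_mult; auto. Qed.

Lemma continuity_pt_oppR (f : R -> R) x : continuity_pt f x -> continuity_pt (fun y => - f y) x.
Proof. intros; apply continuity_pt_opp; auto. Qed.

Lemma continuity_pt_constR (c x : R) : continuity_pt (fun _ => c) x.
Proof. apply continuity_pt_const; intros a b; auto. Qed.

Lemma continuity_pt_idR (x : R) : continuity_pt (fun y => y) x.
Proof. apply derivable_continuous_pt, derivable_pt_id. Qed.

Lemma continuity_pt_is_derive (f : R -> R) x l : is_derive f x l -> continuity_pt f x.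
Proof. intros H; apply continuity_pt_filterlim, (ex_derive_continuous f); exists l; exact H. Qed.

Ltac cont_pt := repeat first [ apply continuity_pt_minusR | apply continuity_pt_plusR
  | apply continuity_pt_multR | apply continuity_pt_oppR | apply continuity_pt_constR
  | apply continuity_pt_idR ].

Lemma sign_cases e : e * e = 1 -> e = 1 \/ e = -1.
Proof.
intros He. assert (Hf : (e - 1) * (e + 1) = 0) by lra.
destruct (Rmult_integral _ _ Hf); [left | right]; lra.
Qed.

Lemma Rabs_Rmax0_le a b : Rabs (Rmax 0 a - Rmax 0 b) <= Rabs (a - b).
Proof.
unfold Rmax; destruct (Rle_dec 0 a); destruct (Rle_dec 0 b);
  unfold Rabs; repeat destruct Rcase_abs; lra.
Qed.

(* A function continuous on the closed half-plane [t >= 0] becomes continuous on the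
   whole plane once precomposed with [t |-> Rmax 0 t]; this lets us use Coquelicot's
   two-dimensional continuity theory. *)
Lemma cont_half_continuity_2d f :
  (forall t x, 0 <= t -> cont_half f t x) ->
  forall t x, continuity_2d_pt (fun s y => f (Rmax 0 s) y) t x.
Proof.
intros Hf t x. apply continuity_2d_pt_filterlim.
apply (filterlim_comp _ _ _ (fun z : R * R => (Rmax 0 (fst z), snd z))
  (fun p : R * R => f (fst p) (snd p)) (locally (t, x))
  (within (fun p : R * R => 0 <= fst p) (locally (Rmax 0 t, x)))).
- intros P [eps HP]. exists eps. intros [s y] [H1 H2]. apply HP; simpl in *.
  + split; [|exact H2]. change (Rabs (Rmax 0 s - Rmax 0 t) < eps).
    eapply Rle_lt_trans; [apply Rabs_Rmax0_le | exact H1].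
  + apply Rmax_l.
- apply Hf, Rmax_l.
Qed.

Lemma continuity_2d_slice (F : R -> R -> R) t x : 0 <= t ->
  continuity_2d_pt (fun s y => F (Rmax 0 s) y) t x -> continuity_pt (F t) x.
Proof.
intros Ht H. apply continuity_pt_locally. intros eps. destruct (H eps) as [d Hd].
exists d. intros y Hy. specialize (Hd t y). rewrite (Rmax_right 0 t) in Hd by exact Ht.
apply Hd; [rewrite Rminus_eq_0, Rabs_R0; apply cond_pos | exact Hy].
Qed.

Lemma locally_pos (P : R -> Prop) t : 0 < t -> (forall y, 0 < y -> P y) -> locally t P.
Proof.
intros Ht HP. exists (mkposreal t Ht). intros y Hy. apply HP.
change (Rabs (y - t) < t) in Hy. apply Rabs_def2 in Hy. lra.
Qed.

Lemma locally_2d_pos (P : R -> R -> Prop) t x : 0 < t ->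
  (forall s y, 0 < s -> P s y) -> locally_2d P t x.
Proof.
intros Ht HP. exists (mkposreal t Ht). intros s y Hs _. apply HP.
simpl in Hs. apply Rabs_def2 in Hs. lra.
Qed.

Lemma continuity_2d_Derive_t (F G : R -> R -> R) t x : 0 < t ->
  (forall s y, 0 < s -> is_derive (fun z => F z y) s (G s y)) ->
  continuity_2d_pt (fun s y => G (Rmax 0 s) y) t x ->
  continuity_2d_pt (fun s y => Derive (fun z => F z y) s) t x.
Proof.
intros Ht HD HC. apply continuity_2d_pt_ext_loc with (f := fun s y => G (Rmax 0 s) y); auto.
apply locally_2d_pos; auto. intros s y Hs.
rewrite Rmax_right by lra. symmetry. apply is_derive_unique. auto.
Qed.

Lemma uniform_continuity_in_time (F : R -> R -> R) A B T eps :
  (forall t x, continuity_2d_pt (fun s y => F (Rmax 0 s) y) t x) -> 0 < eps ->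
  exists d, 0 < d /\ forall tau t x, 0 <= tau <= T -> 0 <= t <= T -> A <= x <= B ->
    Rabs (t - tau) < d -> Rabs (F t x - F tau x) < eps.
Proof.
intros HF He.
destruct (uniform_continuity_2d (fun s y => F (Rmax 0 s) y) 0 T A B (fun t x _ _ => HF t x)
  (mkposreal eps He)) as [d Hd].
exists d. split; [apply cond_pos|].
intros tau t x H1 H2 H3 H4.
specialize (Hd tau x t x H1 H3 H2 H3 H4). simpl in Hd.
rewrite (Rmax_right 0 t), (Rmax_right 0 tau) in Hd by lra.
apply Hd. rewrite Rminus_eq_0, Rabs_R0. apply cond_pos.
Qed.

Lemma uniform_continuity_near (F : R -> R -> R) a b tau eps :
  (forall t x, continuity_2d_pt (fun s y => F (Rmax 0 s) y) t x) -> 0 <= tau -> 0 < eps ->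
  exists d, 0 < d /\ forall t y, tau <= t < tau + d -> a <= y <= b ->
    Rabs (F t y - F tau y) < eps.
Proof.
intros HF Htau He.
destruct (uniform_continuity_in_time F a b (tau + 1) eps HF He) as [d [Hd U]].
exists (Rmin d 1). split; [apply Rmin_pos; lra|].
intros t y Ht Hy. assert (Rmin d 1 <= d) by apply Rmin_l. assert (Rmin d 1 <= 1) by apply Rmin_r.
apply U; try lra. rewrite Rabs_right; lra.
Qed.

Lemma continuity_left_const (f : R -> R -> R) tau tau' x c : 0 <= tau' < tau ->
  continuity_2d_pt (fun s y => f (Rmax 0 s) y) tau x ->
  (forall s, tau' < s < tau -> f s x = c) -> f tau x = c.
Proof.
intros Ht Hc Hs.
destruct (Req_dec (f tau x) c) as [E|E]; auto. exfalso.
assert (Hp : 0 < Rabs (f tau x - c)) by (apply Rabs_pos_lt; lra).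
destruct (Hc (mkposreal _ Hp)) as [d Hd]. simpl in Hd.
assert (Hm1 : Rmin d (tau - tau') <= d) by apply Rmin_l.
assert (Hm2 : Rmin d (tau - tau') <= tau - tau') by apply Rmin_r.
assert (Hm0 : 0 < Rmin d (tau - tau')) by (apply Rmin_pos; [apply cond_pos|lra]).
set (s := tau - Rmin d (tau - tau') / 2).
specialize (Hd s x). rewrite (Rmax_right 0 s), (Rmax_right 0 tau), (Hs s) in Hd
  by (unfold s; lra).
assert (Habs : Rabs (c - f tau x) < Rabs (f tau x - c)).
{ apply Hd; [unfold s; rewrite Rabs_left by lra; lra |].
  rewrite Rminus_eq_0, Rabs_R0. apply cond_pos. }
rewrite Rabs_minus_sym in Habs. lra.
Qed.

Lemma RInt_nonneg_eq0_pt (f : R -> R) a b y : (forall z, continuity_pt f z) ->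
  (forall z, a <= z <= b -> 0 <= f z) -> RInt f a b = 0 -> a < y < b -> f y = 0.
Proof.
intros Hc Hp H0 Hy.
destruct (Rle_lt_or_eq_dec 0 (f y) (Hp y ltac:(lra))) as [Hlt|Heq]; [|auto].
exfalso.
destruct (proj1 (continuity_pt_locally f y) (Hc y) (mkposreal (f y / 2) ltac:(lra))) as [d Hd].
simpl in Hd.
set (d' := Rmin (d / 2) (Rmin (y - a) (b - y) / 2)).
assert (Hm : 0 < Rmin (y - a) (b - y)) by (apply Rmin_pos; lra).
assert (Hd'0 : 0 < d') by (unfold d'; apply Rmin_pos; [destruct d; simpl|]; lra).
assert (d' <= d / 2) by apply Rmin_l.
assert (d' <= Rmin (y - a) (b - y) / 2) by apply Rmin_r.
assert (Rmin (y - a) (b - y) <= y - a) by apply Rmin_l.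
assert (Rmin (y - a) (b - y) <= b - y) by apply Rmin_r.
rewrite <- (RInt_ChaslesR f a (y - d') b), <- (RInt_ChaslesR f (y - d') (y + d') b) in H0
  by (apply ex_RInt_cont; auto).
assert (0 <= RInt f a (y - d'))
  by (apply RInt_ge_0; auto; try lra; [apply ex_RInt_cont; auto | intros; apply Hp; lra]).
assert (0 <= RInt f (y + d') b)
  by (apply RInt_ge_0; auto; try lra; [apply ex_RInt_cont; auto | intros; apply Hp; lra]).
assert (Hmid : RInt (fun _ => f y / 2) (y - d') (y + d') <= RInt f (y - d') (y + d')).
{ apply RInt_le; try lra; try apply ex_RInt_cont; auto using continuity_pt_constR.
  intros z Hz. assert (Hzy : Rabs (z - y) < d) by (apply Rabs_def1; lra).
  specialize (Hd z Hzy). apply Rabs_def2 in Hd. lra. }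
rewrite RInt_constR in Hmid.
assert (0 < (y + d' - (y - d')) * (f y / 2)) by (apply Rmult_lt_0_compat; lra).
lra.
Qed.

Lemma dx_locally_const (f : R -> R -> R) tau y c a b : a < y < b ->
  (forall z, a < z < b -> f tau z = c) -> dx f tau y = 0.
Proof.
intros Hy Hf. unfold dx. rewrite (Derive_ext_loc _ (fun _ => c)); [apply Derive_const|].
assert (Hm : 0 < Rmin (y - a) (b - y)) by (apply Rmin_pos; lra).
exists (mkposreal _ Hm). intros z Hz. change (Rabs (z - y) < Rmin (y - a) (b - y)) in Hz.
assert (Rmin (y - a) (b - y) <= y - a) by apply Rmin_l.
assert (Rmin (y - a) (b - y) <= b - y) by apply Rmin_r.
apply Rabs_def2 in Hz. apply Hf. lra.
Qed.

Lemma derive_nonneg_le (F F' : R -> R) t0 t1 a b :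
  (forall t, t0 < t < t1 -> is_derive F t (F' t)) ->
  (forall t, t0 < t < t1 -> 0 <= F' t) -> t0 < a -> a <= b -> b < t1 -> F a <= F b.
Proof.
intros HD HP Ha Hab Hb. destruct (Req_dec a b) as [->|Hne]; [lra|].
destruct (MVT_gen F a b F') as [c [Hc Hc2]].
- intros x Hx. rewrite Rmin_left, Rmax_right in Hx by lra. apply HD; lra.
- intros x Hx. rewrite Rmin_left, Rmax_right in Hx by lra.
  apply (continuity_pt_is_derive F x (F' x)), HD; lra.
- rewrite Rmin_left, Rmax_right in Hc by lra.
  assert (0 <= F' c) by (apply HP; lra). nra.
Qed.

Definition right_continuous_at (F : R -> R) t0 :=
  forall eps, 0 < eps -> exists d, 0 < d /\ forall t, t0 <= t < t0 + d -> Rabs (F t - F t0) <= eps.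

Lemma derive_nonneg_le_right_cont (F F' : R -> R) t0 :
  (forall t, t0 < t -> is_derive F t (F' t)) -> (forall t, t0 < t -> 0 <= F' t) ->
  right_continuous_at F t0 -> forall t, t0 <= t -> F t0 <= F t.
Proof.
intros HD HP HC t Ht.
destruct (Rle_lt_or_eq_dec t0 t Ht) as [Hlt|<-]; [|lra].
apply Rnot_lt_le. intros Hdec.
destruct (HC ((F t0 - F t) / 2) ltac:(lra)) as [d [Hd Hnear]].
assert (Rmin d (t - t0) <= d) by apply Rmin_l.
assert (Rmin d (t - t0) <= t - t0) by apply Rmin_r.
assert (0 < Rmin d (t - t0)) by (apply Rmin_pos; lra).
set (t' := t0 + Rmin d (t - t0) / 2).
assert (F t' <= F t)
  by (apply (derive_nonneg_le F F' t0 (t + 1)); intros; try apply HD; try apply HP; unfold t'; lra).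
assert (Hn := Hnear t' ltac:(unfold t'; lra)). apply Rabs_le_between in Hn. lra.
Qed.

Lemma derive_zero_const_right_cont (F : R -> R) t0 :
  (forall t, t0 < t -> is_derive F t 0) -> right_continuous_at F t0 ->
  forall t, t0 <= t -> F t = F t0.
Proof.
intros HD HC t Ht. apply Rle_antisym.
- assert (Hopp : - F t0 <= - F t); [|lra].
  apply (derive_nonneg_le_right_cont (fun s => - F s) (fun _ => 0) t0); auto; [| intros; lra |].
  + intros s Hs. apply (is_derive_val _ _ (opp 0)); [|apply Ropp_0].
    apply (is_derive_opp F); auto.
  + intros eps Heps. destruct (HC eps Heps) as [d [Hd Hn]]. exists d. split; auto.
    intros s Hs. rewrite <- Rabs_Ropp. replace (- (- F s - - F t0)) with (F s - F t0) by ring.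
    auto.
- apply (derive_nonneg_le_right_cont F (fun _ => 0) t0); auto; intros; lra.
Qed.

Lemma gronwall_vanishing (E E' : R -> R) t0 t1 :
  (forall t, t0 < t < t1 -> is_derive E t (E' t)) ->
  (forall t, t0 < t < t1 -> E' t <= E t) ->
  (forall eta, 0 < eta -> exists d, 0 < d /\ forall t, t0 < t < t0 + d -> E t <= eta) ->
  forall t, t0 < t < t1 -> E t <= 0.
Proof.
intros HD HL HS t Ht.
set (F := fun z => - (E z * exp (- z))).
assert (HF : forall z, t0 < z < t1 -> is_derive F z ((E z - E' z) * exp (- z))).
{ intros z Hz. unfold F. apply (is_derive_val _ _ (- (E' z * exp (- z) + E z * (-1 * exp (- z))))).
  - apply (is_derive_opp (fun z => E z * exp (- z))).
    apply (is_derive_multR E (fun z => exp (- z))); [apply HD; auto|].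
    auto_derive; [auto | lra].
  - ring. }
assert (Hbound : forall eta, 0 < eta -> E t * exp (- t) <= eta * exp (- t0)).
{ intros eta Heta. destruct (HS eta Heta) as [d [Hd Hd2]].
  assert (Rmin d (t - t0) <= d) by apply Rmin_l.
  assert (Rmin d (t - t0) <= t - t0) by apply Rmin_r.
  assert (0 < Rmin d (t - t0)) by (apply Rmin_pos; lra).
  set (t' := t0 + Rmin d (t - t0) / 2).
  assert (F t' <= F t).
  { apply (derive_nonneg_le F (fun z => (E z - E' z) * exp (- z)) t0 t1); auto; try (unfold t'; lra).
    intros z Hz. assert (E' z <= E z) by auto. assert (0 < exp (- z)) by apply exp_pos. nra. }
  assert (E t' <= eta) by (apply Hd2; unfold t'; lra).
  assert (exp (- t') < exp (- t0)) by (apply exp_increasing; unfold t'; lra).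
  assert (0 < exp (- t')) by apply exp_pos.
  unfold F in *. nra. }
destruct (Rle_or_lt (E t) 0) as [H|H]; auto.
exfalso.
assert (0 < exp (- t)) by apply exp_pos.
assert (0 < exp (- t0)) by apply exp_pos.
assert (Hhalf := Hbound (E t * exp (- t) / (2 * exp (- t0)))
  ltac:(apply Rdiv_lt_0_compat; nra)).
replace (E t * exp (- t) / (2 * exp (- t0)) * exp (- t0)) with (E t * exp (- t) / 2)
  in Hhalf by (field; lra).
nra.
Qed.

Lemma RInt_right_cont (f : R -> R -> R) a b t0 : a <= b -> 0 <= t0 ->
  (forall t x, continuity_2d_pt (fun s y => f (Rmax 0 s) y) t x) ->
  right_continuous_at (fun t => RInt (f t) a b) t0.
Proof.
intros Hab Ht0 HF eps He.
assert (He' : 0 < eps / (b - a + 1)) by (apply Rdiv_lt_0_compat; lra).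
destruct (uniform_continuity_in_time f a b (t0 + 1) (eps / (b - a + 1)) HF He')
  as [d [Hd U]].
exists (Rmin d 1). split; [apply Rmin_pos; lra|].
intros t Ht.
assert (Rmin d 1 <= d) by apply Rmin_l. assert (Rmin d 1 <= 1) by apply Rmin_r.
assert (Cf : forall s, 0 <= s -> forall y, continuity_pt (f s) y)
  by (intros s Hs y; apply (continuity_2d_slice f); auto).
rewrite <- RInt_minusR by (apply ex_RInt_cont, Cf; lra).
apply Rle_trans with ((b - a) * (eps / (b - a + 1))).
- apply abs_RInt_le_const; [lra | |].
  + apply ex_RInt_cont. intros; apply continuity_pt_minusR; apply Cf; lra.
  + intros y Hy. left. apply (U t0 t y); try lra. rewrite Rabs_right; lra.
- apply Rle_trans with ((b - a + 1) * (eps / (b - a + 1))).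
  + apply Rmult_le_compat_r; lra.
  + right; field; lra.
Qed.

Lemma RInt_gen_compact_support (f : R -> R) L : 0 < L -> (forall y, continuity_pt f y) ->
  (forall y, L < Rabs y -> f y = 0) ->
  RInt_gen f (Rbar_locally m_infty) (Rbar_locally p_infty) = RInt f (- L) L.
Proof.
intros HL Hc Hz.
apply (is_RInt_gen_unique (V := R_CompleteNormedModule)).
apply (proj2 (filterlimi_locally _ _)). intros eps.
apply Filter_prod with (Q := fun a => a < - L) (R := fun b => L < b);
  [exists (- L); auto | exists L; auto |].
intros a b Ha Hb. exists (RInt f a b). split.
- apply (RInt_correct (V := R_CompleteNormedModule)), ex_RInt_cont; auto.
- replace (RInt f a b) with (RInt f (- L) L); [apply ball_center|].
  rewrite <- (RInt_ChaslesR f a (- L) b), <- (RInt_ChaslesR f (- L) L b)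
    by (apply ex_RInt_cont; auto).
  rewrite (RInt_eq0 f a (- L)), (RInt_eq0 f L b), Rplus_0_l, Rplus_0_r; [reflexivity | |].
  + intros x Hx. rewrite Rmin_left, Rmax_right in Hx by lra.
    apply Hz. rewrite Rabs_right; lra.
  + intros x Hx. rewrite Rmin_left, Rmax_right in Hx by lra.
    apply Hz. rewrite Rabs_left; lra.
Qed.

Lemma RInt_sym_support (f : R -> R) a L : 0 < a <= L -> (forall y, continuity_pt f y) ->
  (forall y, a < Rabs y -> f y = 0) -> RInt f (- L) L = RInt f (- a) a.
Proof.
intros Ha Hc Hz.
rewrite <- (RInt_ChaslesR f (- L) (- a) L), <- (RInt_ChaslesR f (- a) a L)
  by (apply ex_RInt_cont; auto).
rewrite (RInt_eq0 f (- L) (- a)), (RInt_eq0 f a L), Rplus_0_l, Rplus_0_r; [reflexivity | |].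
- intros x Hx. rewrite Rmin_left, Rmax_right in Hx by lra.
  apply Hz. rewrite Rabs_right; lra.
- intros x Hx. rewrite Rmin_left, Rmax_right in Hx by lra.
  apply Hz. rewrite Rabs_left; lra.
Qed.

(* The constant is [int_{-a}^{a} x^2 dx = 2 a^3 / 3]. *)
Lemma moment_cauchy_schwarz (g : R -> R) a L : 0 < a <= L -> (forall y, continuity_pt g y) ->
  (forall y, a < Rabs y -> g y = 0) ->
  (RInt (fun y => y * g y) (- L) L) ^ 2 <= 2 * a ^ 3 / 3 * RInt (fun y => g y * g y) (- L) L.
Proof.
intros Ha Hc Hz.
rewrite (RInt_sym_support (fun y => y * g y) a L), (RInt_sym_support (fun y => g y * g y) a L);
  auto; try (intros; rewrite Hz; auto; ring); try (intros; cont_pt; auto).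
set (H := RInt (fun y => y * g y) (- a) a).
set (Q := RInt (fun y => g y * g y) (- a) a).
set (A := 2 * a ^ 3 / 3).
assert (HA : RInt (fun y => y * y) (- a) a = A).
{ rewrite (RInt_primitive (fun y => / 3 * (y * y * y))).
  - unfold A. simpl. field.
  - intros y _. auto_derive; [auto | field].
  - intros; cont_pt. }
assert (HApos : 0 < A)
  by (unfold A; apply Rdiv_lt_0_compat; [apply Rmult_lt_0_compat; [|apply pow_lt]|]; lra).
set (lam := H / A).
assert (Hsq : 0 <= RInt (fun y => g y * g y - (2 * lam * (y * g y) - lam * lam * (y * y))) (- a) a).
{ apply RInt_ge_0; [lra | apply ex_RInt_cont; intros; cont_pt; auto |].
  intros z _. replace (g z * g z - (2 * lam * (z * g z) - lam * lam * (z * z)))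
    with ((g z - lam * z) ^ 2) by ring.
  apply pow2_ge_0. }
rewrite !RInt_minusR, !RInt_scalR in Hsq; try (apply ex_RInt_cont; intros; cont_pt; auto).
fold H Q in Hsq. rewrite HA in Hsq. unfold lam in Hsq.
assert (0 <= Q * A - H * H).
{ replace (Q * A - H * H) with ((Q - (2 * (H / A) * H - H / A * (H / A) * A)) * A)
    by (field; lra).
  apply Rmult_le_pos; lra. }
simpl. nra.
Qed.

Lemma continuous_induction (P : R -> Prop) T : 0 <= T ->
  (forall s t, s <= t -> P t -> P s) -> P 0 ->
  (forall t, 0 < t <= T -> (forall s, 0 <= s < t -> P s) -> P t) ->
  (forall t, 0 <= t < T -> P t -> exists d, 0 < d /\ P (t + d)) ->
  P T.
Proof.
intros HT Hdown H0 Hclosed Hopen.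
set (S := fun tau => 0 <= tau <= T /\ P tau).
destruct (completeness S) as [m [Hub Hlub]].
- exists T. intros y [Hy _]. lra.
- exists 0. split; [lra | exact H0].
- assert (Hm0 : 0 <= m) by (apply Hub; split; [lra | exact H0]).
  assert (HmT : m <= T) by (apply Hlub; intros y [Hy _]; lra).
  assert (Hbelow : forall s, 0 <= s < m -> P s).
  { intros s Hs. apply NNPP. intros HPs.
    assert (m <= s); [|lra].
    apply Hlub. intros y [Hy HPy]. destruct (Rle_or_lt y s) as [|Hsy]; auto.
    exfalso. apply HPs, (Hdown s y); auto; lra. }
  assert (HPm : P m).
  { destruct (Rle_lt_or_eq_dec 0 m Hm0) as [Hpos|<-]; auto. }
  destruct (Rle_lt_or_eq_dec m T HmT) as [HmT'|<-]; auto.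
  destruct (Hopen m ltac:(lra) HPm) as [d [Hd HPd]].
  assert (Rmin d (T - m) <= d) by apply Rmin_l.
  assert (Rmin d (T - m) <= T - m) by apply Rmin_r.
  assert (0 < Rmin d (T - m)) by (apply Rmin_pos; lra).
  assert (m + Rmin d (T - m) <= m); [|lra].
  apply Hub. split; [lra|]. apply (Hdown _ (m + d)); auto; lra.
Qed.

(* The Riccati inequality [H' >= 3 H^2 / (4 (R + sigma t)^3)] integrates to
   [1/H(t) - 3/(8 sigma (R+sigma t)^2)] being nonincreasing, which is impossible
   for all [t > 0] once [H] starts above [8 sigma R^2 / 3]. *)
Lemma riccati_no_global_solution (H P : R -> R) (sig Rad H0 : R) :
  0 < sig -> 0 < Rad -> 8 * sig * Rad ^ 2 < 3 * H0 ->
  (forall t, 0 < t -> is_derive H t (P t)) -> (forall t, 0 < t -> H0 <= H t) ->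
  (forall t, 0 < t -> 3 * H t ^ 2 <= 4 * (Rad + sig * t) ^ 3 * P t) -> False.
Proof.
intros Hs HR HH0 HD Hge Hric.
assert (HH0p : 0 < H0) by (assert (0 < Rad ^ 2) by (apply pow_lt; lra); nra).
set (G := fun s => 3 / (8 * sig * (Rad + sig * s) ^ 2) - / H s).
assert (HG : forall s, 0 < s -> is_derive G s (P s / H s ^ 2 - 3 / (4 * (Rad + sig * s) ^ 3))).
{ intros s Hs0. assert (H0 <= H s) by auto. assert (0 < Rad + sig * s) by nra.
  assert (Rad + sig * s <> 0) by lra. assert (sig <> 0) by lra.
  apply (is_derive_val _ _ (- (3 * (8 * sig * (2 * (Rad + sig * s) * sig))
                               / (8 * sig * (Rad + sig * s) ^ 2) ^ 2) - - P s / H s ^ 2)).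
  - apply (is_derive_minusR (fun s => 3 / (8 * sig * (Rad + sig * s) ^ 2)) (fun s => / H s)).
    + auto_derive; [apply Rgt_not_eq; repeat apply Rmult_lt_0_compat; lra | field; auto].
    + apply is_derive_inv; [apply HD; auto | lra].
  - field. split; lra. }
assert (HGn : forall s, 0 < s -> 0 <= P s / H s ^ 2 - 3 / (4 * (Rad + sig * s) ^ 3)).
{ intros s Hs0. assert (H0 <= H s) by auto. assert (Ha : 0 < Rad + sig * s) by nra.
  assert (0 < (Rad + sig * s) ^ 3) by (apply pow_lt; lra).
  assert (0 < H s ^ 2) by (apply pow_lt; lra).
  assert (Hr := Hric s Hs0).
  replace (P s / H s ^ 2 - 3 / (4 * (Rad + sig * s) ^ 3))
    with ((4 * (Rad + sig * s) ^ 3 * P s - 3 * H s ^ 2) / (4 * (Rad + sig * s) ^ 3 * H s ^ 2))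
    by (field; lra).
  apply Rdiv_le_0_compat; nra. }
set (tp := Rmin 1 ((3 * H0 - 8 * sig * Rad ^ 2) / (16 * sig ^ 2 * (2 * Rad + sig)))).
assert (Hden : 0 < 16 * sig ^ 2 * (2 * Rad + sig))
  by (apply Rmult_lt_0_compat; [apply Rmult_lt_0_compat; [|apply pow_lt]|]; lra).
assert (Htp0 : 0 < tp) by (apply Rmin_pos; [lra | apply Rdiv_lt_0_compat; lra]).
assert (Htp1 : tp <= 1) by apply Rmin_l.
assert (Htp2 : tp * (16 * sig ^ 2 * (2 * Rad + sig)) <= 3 * H0 - 8 * sig * Rad ^ 2).
{ apply (Rmult_le_reg_r (/ (16 * sig ^ 2 * (2 * Rad + sig)))); [apply Rinv_0_lt_compat; lra|].
  replace (tp * (16 * sig ^ 2 * (2 * Rad + sig)) * / (16 * sig ^ 2 * (2 * Rad + sig))) with tp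
    by (field; lra).
  apply Rmin_r. }
set (ap := Rad + sig * tp).
assert (Hap : 8 * sig * ap ^ 2 < 3 * H0).
{ assert (sig ^ 3 * (tp * tp) <= sig ^ 3 * tp) by (apply Rmult_le_compat_l; [apply pow_le|]; nra).
  unfold ap. simpl in *. nra. }
assert (Hap0 : 0 < ap) by (unfold ap; nra).
set (m := 3 / (8 * sig * ap ^ 2) - / H0).
assert (Hm : 0 < m).
{ unfold m. assert (0 < 8 * sig * ap ^ 2) by (apply Rmult_lt_0_compat; [|apply pow_lt]; lra).
  assert (/ H0 < 3 / (8 * sig * ap ^ 2)); [|lra].
  apply (Rmult_lt_reg_r (H0 * (8 * sig * ap ^ 2))); [apply Rmult_lt_0_compat; lra|].
  replace (/ H0 * (H0 * (8 * sig * ap ^ 2))) with (8 * sig * ap ^ 2) by (field; lra).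
  replace (3 / (8 * sig * ap ^ 2) * (H0 * (8 * sig * ap ^ 2))) with (3 * H0) by (field; lra).
  lra. }
set (T := tp + 3 / (8 * sig ^ 2 * m * Rad)).
assert (HT : 0 < 3 / (8 * sig ^ 2 * m * Rad))
  by (apply Rdiv_lt_0_compat; [lra | repeat apply Rmult_lt_0_compat; try apply pow_lt; lra]).
set (aT := Rad + sig * T).
assert (HaT : 3 / (8 * sig * aT ^ 2) < m).
{ assert (Hq : 0 < 8 * sig * m) by (repeat apply Rmult_lt_0_compat; lra).
  assert (0 < 3 / (8 * sig * m * Rad)) by (apply Rdiv_lt_0_compat; [|apply Rmult_lt_0_compat]; lra).
  assert (HaT1 : 3 / (8 * sig * m * Rad) < aT).
  { unfold aT, T.
    replace (3 / (8 * sig * m * Rad)) with (sig * (3 / (8 * sig ^ 2 * m * Rad))) by (field; lra).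
    nra. }
  assert (Rad < aT) by (unfold aT, T; nra).
  assert (3 < 8 * sig * m * aT ^ 2).
  { apply (Rmult_lt_reg_r (/ (8 * sig * m))); [apply Rinv_0_lt_compat; lra|].
    replace (8 * sig * m * aT ^ 2 * / (8 * sig * m)) with (aT * aT) by (field; lra).
    replace (3 * / (8 * sig * m)) with (Rad * (3 / (8 * sig * m * Rad))) by (field; lra).
    apply Rmult_le_0_lt_compat; lra. }
  assert (0 < aT ^ 2) by (apply pow_lt; lra).
  apply (Rmult_lt_reg_r (8 * sig * aT ^ 2)); [nra|].
  replace (3 / (8 * sig * aT ^ 2) * (8 * sig * aT ^ 2)) with 3 by (field; lra). lra. }
assert (Hmono : G tp <= G T)
  by (apply (derive_nonneg_le G (fun s => P s / H s ^ 2 - 3 / (4 * (Rad + sig * s) ^ 3)) 0 (T + 1));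
      intros; try apply HG; try apply HGn; unfold T in *; lra).
assert (Htp : / H tp <= / H0) by (apply Rinv_le_contravar; auto).
assert (0 < / H T) by (apply Rinv_0_lt_compat; assert (H0 <= H T) by (apply Hge; unfold T; lra); lra).
unfold G in Hmono. fold ap aT in Hmono. unfold m in HaT. lra.
Qed.

(** * Sound speed of a polytropic gas *)

Lemma Rpower_pos r a : 0 < Rpower r a.
Proof. apply exp_pos. Qed.

Lemma Rpower_minus1 r a : 0 < r -> Rpower r (a - 1) = Rpower r a / r.
Proof. intros Hr. unfold Rminus. rewrite Rpower_plus, Rpower_Ropp, Rpower_1; auto. Qed.

Lemma is_derive_Rpower r a : 0 < r -> is_derive (fun x => Rpower x a) r (a * Rpower r (a - 1)).
Proof. intros Hr. apply is_derive_Reals, derivable_pt_lim_power, Hr. Qed.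

(* For [P = K rho^gamma]: the sound speed [c = sqrt (P')], the potential [g] with
   [g' = c / rho] entering the Riemann invariants [u +- g], and the enthalpy [h] with
   [h' = c^2 / rho]. *)
Section SoundSpeed.

Variables K gamma : R.
Hypothesis HK : 0 < K.
Hypothesis Hg : 1 < gamma.

Definition sound r := sqrt (K * gamma) * Rpower r ((gamma - 1) / 2).
Definition sound_integral r := 2 / (gamma - 1) * sound r.
Definition enthalpy r := K * gamma / (gamma - 1) * Rpower r (gamma - 1).

Lemma sound_pos r : 0 < sound r.
Proof. apply Rmult_lt_0_compat; [apply sqrt_lt_R0; nra | apply Rpower_pos]. Qed.

Lemma sound_sq r : sound r * sound r = K * gamma * Rpower r (gamma - 1).
Proof.
unfold sound.
set (p := Rpower r ((gamma - 1) / 2)).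
replace (sqrt (K * gamma) * p * (sqrt (K * gamma) * p))
  with ((sqrt (K * gamma) * sqrt (K * gamma)) * (p * p)) by ring.
unfold p.
rewrite sqrt_sqrt, <- Rpower_plus by nra. do 2 f_equal. field.
Qed.

Lemma sound_sqrt r : sound r = sqrt (K * gamma * Rpower r (gamma - 1)).
Proof.
unfold sound. rewrite (sqrt_mult (K * gamma)) by (left; first [apply Rpower_pos | nra]). f_equal.
rewrite <- Rpower_sqrt, Rpower_mult by apply Rpower_pos. reflexivity.
Qed.

Lemma sound_derive r : 0 < r -> is_derive sound r ((gamma - 1) / 2 * sound r / r).
Proof.
intros Hr. unfold sound.
apply (is_derive_val _ _ (sqrt (K * gamma) * ((gamma - 1) / 2 * Rpower r ((gamma - 1) / 2 - 1)))).
- apply (is_derive_scalR (fun x => Rpower x ((gamma - 1) / 2))), is_derive_Rpower, Hr.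
- rewrite Rpower_minus1 by exact Hr. field. lra.
Qed.

Lemma sound_integral_derive r : 0 < r -> is_derive sound_integral r (sound r / r).
Proof.
intros Hr. unfold sound_integral.
apply (is_derive_val _ _ (2 / (gamma - 1) * ((gamma - 1) / 2 * sound r / r))).
- apply is_derive_scalR, sound_derive, Hr.
- field. lra.
Qed.

Lemma enthalpy_derive r : 0 < r -> is_derive enthalpy r (sound r * sound r / r).
Proof.
intros Hr. unfold enthalpy. rewrite sound_sq.
apply (is_derive_val _ _ (K * gamma / (gamma - 1) * ((gamma - 1) * Rpower r (gamma - 1 - 1)))).
- apply (is_derive_scalR (fun x => Rpower x (gamma - 1))), is_derive_Rpower, Hr.
- rewrite (Rpower_minus1 r (gamma - 1)) by exact Hr. field. lra.
Qed.

Lemma sound_continuous r : 0 < r -> continuity_pt sound r.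
Proof. intros Hr. exact (continuity_pt_is_derive _ _ _ (sound_derive r Hr)). Qed.

Lemma sound_integral_continuous r : 0 < r -> continuity_pt sound_integral r.
Proof. intros Hr. exact (continuity_pt_is_derive _ _ _ (sound_integral_derive r Hr)). Qed.

Lemma enthalpy_continuous r : 0 < r -> continuity_pt enthalpy r.
Proof. intros Hr. exact (continuity_pt_is_derive _ _ _ (enthalpy_derive r Hr)). Qed.

Lemma pressure_derive r : 0 < r -> is_derive (fun x => K * Rpower x gamma) r (sound r * sound r).
Proof.
intros Hr. rewrite sound_sq, Rmult_assoc.
apply (is_derive_scalR (fun x => Rpower x gamma)), is_derive_Rpower, Hr.
Qed.

Lemma sound_integral_inj a b : 0 < a -> 0 < b -> sound_integral a = sound_integral b -> a = b.
Proof.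
intros Ha Hb H. unfold sound_integral, sound in H.
assert (Hs : 0 < sqrt (K * gamma)) by (apply sqrt_lt_R0; nra).
assert (H2 : Rpower a ((gamma - 1) / 2) = Rpower b ((gamma - 1) / 2)).
{ apply (Rmult_eq_reg_l (2 / (gamma - 1) * sqrt (K * gamma))).
  - rewrite !Rmult_assoc. exact H.
  - apply Rgt_not_eq, Rmult_lt_0_compat; [apply Rdiv_lt_0_compat|]; lra. }
destruct (Rtotal_order a b) as [Hl|[Hl|Hl]]; auto; exfalso.
- assert (Rpower a ((gamma - 1) / 2) < Rpower b ((gamma - 1) / 2)) by (apply Rlt_Rpower_l; lra).
  lra.
- assert (Rpower b ((gamma - 1) / 2) < Rpower a ((gamma - 1) / 2)) by (apply Rlt_Rpower_l; lra).
  lra.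
Qed.

(* [h' = K gamma rho^(gamma - 2)] is nondecreasing exactly when [gamma >= 2]. *)
Lemma enthalpy_convex r rb : 2 <= gamma -> 0 < r -> 0 < rb ->
  sound rb * sound rb / rb * (r - rb) <= enthalpy r - enthalpy rb.
Proof.
intros Hg2 Hr Hrb. destruct (Req_dec r rb) as [->|Hne]; [lra|].
assert (Hh' : forall c, 0 < c -> sound c * sound c / c = K * gamma * Rpower c (gamma - 2)).
{ intros c Hc. rewrite sound_sq. replace (gamma - 2) with (gamma - 1 - 1) by ring.
  rewrite (Rpower_minus1 c (gamma - 1)) by exact Hc. field. lra. }
assert (Hm : 0 < Rmin rb r) by (apply Rmin_pos; lra).
destruct (MVT_gen enthalpy rb r (fun c => sound c * sound c / c)) as [c [Hc Hc2]].
- intros x Hx. apply enthalpy_derive. lra.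
- intros x Hx. apply (continuity_pt_is_derive _ _ _ (enthalpy_derive x ltac:(lra))).
- assert (Hkg : 0 < K * gamma) by nra.
  rewrite Hc2, !Hh' by lra.
  destruct (Rlt_or_le r rb) as [Hl|Hl].
  + rewrite Rmin_right, Rmax_left in Hc by lra.
    assert (Rpower c (gamma - 2) <= Rpower rb (gamma - 2)) by (apply Rle_Rpower_l; lra).
    assert (K * gamma * Rpower c (gamma - 2) <= K * gamma * Rpower rb (gamma - 2))
      by (apply Rmult_le_compat_l; lra).
    nra.
  + rewrite Rmin_left, Rmax_right in Hc by lra.
    assert (Rpower rb (gamma - 2) <= Rpower c (gamma - 2)) by (apply Rle_Rpower_l; lra).
    assert (K * gamma * Rpower rb (gamma - 2) <= K * gamma * Rpower c (gamma - 2))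
      by (apply Rmult_le_compat_l; lra).
    nra.
Qed.

End SoundSpeed.

(** * Riemann invariants and finite propagation speed *)

Section EulerSolution.

(* [rt] and [ut] are the continuous extensions of [rho_t] and [u_t] to [t >= 0]
   supplied by [C1_half]. *)
Variables (K gamma rhobar Rad : R) (rho u rt ut : R -> R -> R).
Hypothesis HK : 0 < K.
Hypothesis Hg : 2 <= gamma.
Hypothesis Hrb : 0 < rhobar.
Hypothesis HR : 0 < Rad.
Hypothesis Hr_dx : forall t x : R, 0 <= t -> ex_derive (fun y => rho t y) x.
Hypothesis Hr_dt : forall t x : R, 0 < t -> ex_derive (fun s => rho s x) t.
Hypothesis Hr_c : forall t x, 0 <= t -> cont_half rho t x.
Hypothesis Hr_dxc : forall t x, 0 <= t -> cont_half (dx rho) t x.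
Hypothesis Hrt_eq : forall t x, 0 < t -> rt t x = dt rho t x.
Hypothesis Hrt_c : forall t x, 0 <= t -> cont_half rt t x.
Hypothesis Hu_dx : forall t x : R, 0 <= t -> ex_derive (fun y => u t y) x.
Hypothesis Hu_dt : forall t x : R, 0 < t -> ex_derive (fun s => u s x) t.
Hypothesis Hu_c : forall t x, 0 <= t -> cont_half u t x.
Hypothesis Hu_dxc : forall t x, 0 <= t -> cont_half (dx u) t x.
Hypothesis Hut_eq : forall t x, 0 < t -> ut t x = dt u t x.
Hypothesis Hut_c : forall t x, 0 <= t -> cont_half ut t x.
Hypothesis Hpos : forall t x, 0 <= t -> 0 < rho t x.
Hypothesis Hmass : forall t x, 0 < t ->
  dt rho t x + Derive (fun y => rho t y * u t y) x = 0.
Hypothesis Hmom : forall t x, 0 < t ->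
  rho t x * (dt u t x + u t x * dx u t x) + Derive (fun y => K * Rpower (rho t y) gamma) x = 0.
Hypothesis Hinit : forall x, Rad < Rabs x -> rho 0 x = rhobar /\ u 0 x = 0.

Let Hg1 : 1 < gamma.
Proof. lra. Qed.

Local Notation c := (sound K gamma).
Local Notation sigma := (sound K gamma rhobar).

Lemma sigma_pos : 0 < sigma.
Proof. apply sound_pos; auto. Qed.

Lemma sigma_mul_nonneg t : 0 <= t -> 0 <= sigma * t.
Proof. intros; apply Rmult_le_pos; [left; apply sigma_pos | lra]. Qed.

Lemma rho_dx t x : 0 <= t -> is_derive (fun y => rho t y) x (dx rho t x).
Proof. intros; apply Derive_correct; auto. Qed.

Lemma u_dx t x : 0 <= t -> is_derive (fun y => u t y) x (dx u t x).
Proof. intros; apply Derive_correct; auto. Qed.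

Lemma rho_dt t x : 0 < t -> is_derive (fun s => rho s x) t (rt t x).
Proof. intros; rewrite Hrt_eq; auto; apply Derive_correct; auto. Qed.

Lemma u_dt t x : 0 < t -> is_derive (fun s => u s x) t (ut t x).
Proof. intros; rewrite Hut_eq; auto; apply Derive_correct; auto. Qed.

Lemma comp_rho_dx (G G' : R -> R) t x : 0 <= t -> (forall r, 0 < r -> is_derive G r (G' r)) ->
  is_derive (fun y => G (rho t y)) x (G' (rho t x) * dx rho t x).
Proof.
intros Ht HG. apply (is_derive_val _ _ (dx rho t x * G' (rho t x))); [|ring].
apply (is_derive_compR G (fun y => rho t y)); [apply HG, Hpos | apply rho_dx]; auto.
Qed.

Lemma comp_rho_dt (G G' : R -> R) t x : 0 < t -> (forall r, 0 < r -> is_derive G r (G' r)) ->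
  is_derive (fun s => G (rho s x)) t (G' (rho t x) * rt t x).
Proof.
intros Ht HG. apply (is_derive_val _ _ (rt t x * G' (rho t x))); [|ring].
apply (is_derive_compR G (fun s => rho s x)); [apply HG, Hpos; lra | apply rho_dt; auto].
Qed.

Lemma mass_eq t x : 0 < t -> rt t x + dx rho t x * u t x + rho t x * dx u t x = 0.
Proof.
intros Ht. rewrite Hrt_eq, <- (Hmass t x Ht) by auto.
rewrite (Derive_mult (fun y => rho t y) (fun y => u t y)); [| apply Hr_dx; lra | apply Hu_dx; lra].
unfold dx. ring.
Qed.

Lemma momentum_eq t x : 0 < t ->
  rho t x * (ut t x + u t x * dx u t x) + c (rho t x) * c (rho t x) * dx rho t x = 0.
Proof.
intros Ht. rewrite Hut_eq, <- (Hmom t x Ht) by auto. f_equal.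
symmetry. apply is_derive_unique.
apply (is_derive_val _ _ (c (rho t x) * c (rho t x) * dx rho t x)); [|ring].
apply (comp_rho_dx (fun r => K * Rpower r gamma) (fun r => c r * c r)); [lra|].
intros; apply pressure_derive; auto.
Qed.

(* Riemann invariants [w_e = u + e (g(rho) - g(rhobar))] for [e = 1, -1], transported
   with the characteristic speeds [lambda_e = u + e c(rho)]. *)
Definition riemann e t x :=
  u t x + e * (sound_integral K gamma (rho t x) - sound_integral K gamma rhobar).
Definition riemann_dx e t x := dx u t x + e * (c (rho t x) / rho t x * dx rho t x).
Definition riemann_dt e t x := ut t x + e * (c (rho t x) / rho t x * rt t x).
Definition char_speed e t x := u t x + e * c (rho t x).
Definition char_speed_dx e t x :=
  dx u t x + e * ((gamma - 1) / 2 * c (rho t x) / rho t x * dx rho t x).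

Lemma riemann_is_derive_x e t x : 0 <= t -> is_derive (fun y => riemann e t y) x (riemann_dx e t x).
Proof.
intros Ht. unfold riemann, riemann_dx. apply is_derive_plusR; [apply u_dx; auto|].
apply is_derive_scalR. apply (is_derive_val _ _ (c (rho t x) / rho t x * dx rho t x - 0)); [|ring].
apply is_derive_minusR; [|apply is_derive_constR].
apply (comp_rho_dx (sound_integral K gamma) (fun r => c r / r)); auto.
intros; apply sound_integral_derive; auto.
Qed.

Lemma riemann_is_derive_t e t x : 0 < t -> is_derive (fun s => riemann e s x) t (riemann_dt e t x).
Proof.
intros Ht. unfold riemann, riemann_dt. apply is_derive_plusR; [apply u_dt; auto|].
apply is_derive_scalR. apply (is_derive_val _ _ (c (rho t x) / rho t x * rt t x - 0)); [|ring].
apply is_derive_minusR; [|apply is_derive_constR].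
apply (comp_rho_dt (sound_integral K gamma) (fun r => c r / r)); auto.
intros; apply sound_integral_derive; auto.
Qed.

Lemma char_speed_is_derive_x e t x : 0 <= t ->
  is_derive (fun y => char_speed e t y) x (char_speed_dx e t x).
Proof.
intros Ht. unfold char_speed, char_speed_dx. apply is_derive_plusR; [apply u_dx; auto|].
apply is_derive_scalR.
apply (comp_rho_dx c (fun r => (gamma - 1) / 2 * c r / r)); auto.
intros; apply sound_derive; auto.
Qed.

Lemma riemann_transport e t x : e * e = 1 -> 0 < t ->
  riemann_dt e t x = - (char_speed e t x * riemann_dx e t x).
Proof.
intros He Ht. unfold riemann_dt, char_speed, riemann_dx.
assert (Hr := Hpos t x (Rlt_le _ _ Ht)).
assert (H1 := mass_eq t x Ht). assert (H2 := momentum_eq t x Ht).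
set (cr := c (rho t x)) in *. set (r := rho t x) in *.
apply (Rmult_eq_reg_l r); [|lra].
replace (r * (ut t x + e * (cr / r * rt t x)))
  with ((r * (ut t x + u t x * dx u t x) + (e * e) * cr * cr * dx rho t x)
        + e * cr * (rt t x + dx rho t x * u t x + r * dx u t x)
        - r * ((u t x + e * cr) * (dx u t x + e * (cr / r * dx rho t x)))) by (field; lra).
rewrite He, H1. lra.
Qed.

Lemma continuity_2d_of_rho (G : R -> R) t x : (forall r, 0 < r -> continuity_pt G r) ->
  continuity_2d_pt (fun s y => G (rho (Rmax 0 s) y)) t x.
Proof.
intros HG. apply continuity_1d_2d_pt_comp; [apply HG, Hpos, Rmax_l|].
apply cont_half_continuity_2d; auto.
Qed.

Ltac cont_2d := unfold Rdiv; repeat first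
  [ apply continuity_2d_of_rho; intros r Hr;
    first [ eapply sound_continuous | eapply sound_integral_continuous
          | eapply enthalpy_continuous ]; eassumption
  | apply continuity_2d_pt_minus | apply continuity_2d_pt_plus | apply continuity_2d_pt_mult
  | apply continuity_2d_pt_opp | apply continuity_2d_pt_const | apply continuity_2d_pt_id2
  | apply continuity_2d_pt_inv; [| apply Rgt_not_eq, Hpos, Rmax_l]
  | apply cont_half_continuity_2d; assumption ].

Lemma riemann_cont e t x : continuity_2d_pt (fun s y => riemann e (Rmax 0 s) y) t x.
Proof. unfold riemann. cont_2d. Qed.
Lemma riemann_dx_cont e t x : continuity_2d_pt (fun s y => riemann_dx e (Rmax 0 s) y) t x.
Proof. unfold riemann_dx. cont_2d. Qed.
Lemma riemann_dt_cont e t x : continuity_2d_pt (fun s y => riemann_dt e (Rmax 0 s) y) t x.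
Proof. unfold riemann_dt. cont_2d. Qed.
Lemma char_speed_cont e t x : continuity_2d_pt (fun s y => char_speed e (Rmax 0 s) y) t x.
Proof. unfold char_speed. cont_2d. Qed.
Lemma char_speed_dx_cont e t x : continuity_2d_pt (fun s y => char_speed_dx e (Rmax 0 s) y) t x.
Proof. unfold char_speed_dx. cont_2d. Qed.


Ltac cont_slice_2d := first
  [ apply riemann_cont | apply riemann_dx_cont | apply char_speed_cont
  | apply char_speed_dx_cont | cont_2d ].

Ltac cont_slice := unfold Rdiv; repeat first
  [ match goal with
    | |- continuity_pt (fun y => ?F ?t y) _ =>
        apply (continuity_2d_slice F t); [lra | cont_slice_2d]
    | |- continuity_pt (?F ?t) _ =>
        apply (continuity_2d_slice F t); [lra | cont_slice_2d]
    | |- continuity_pt (fun y => ?G (rho ?t y)) _ =>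
        apply (continuity_2d_slice (fun s y => G (rho s y)) t); [lra | cont_2d]
    end
  | apply continuity_pt_minusR | apply continuity_pt_plusR | apply continuity_pt_multR
  | apply continuity_pt_oppR | apply continuity_pt_constR | apply continuity_pt_idR ].

Definition energy t y := riemann 1 t y * riemann 1 t y + riemann (-1) t y * riemann (-1) t y.
Definition energy_dt t y :=
  2 * riemann 1 t y * riemann_dt 1 t y + 2 * riemann (-1) t y * riemann_dt (-1) t y.

Lemma energy_nonneg t y : 0 <= energy t y.
Proof. unfold energy. nra. Qed.

Lemma energy_cont t x : continuity_2d_pt (fun s y => energy (Rmax 0 s) y) t x.
Proof.
unfold energy.
repeat first [ apply riemann_cont | apply continuity_2d_pt_plus | apply continuity_2d_pt_mult ].
Qed.

Lemma energy_slice_cont t y : 0 <= t -> continuity_pt (energy t) y.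
Proof. intros Ht. apply (continuity_2d_slice energy); auto using energy_cont. Qed.

Lemma energy_is_derive_t t y : 0 < t -> is_derive (fun s => energy s y) t (energy_dt t y).
Proof.
intros Ht. unfold energy, energy_dt.
apply (is_derive_val _ _ (riemann_dt 1 t y * riemann 1 t y + riemann 1 t y * riemann_dt 1 t y
  + (riemann_dt (-1) t y * riemann (-1) t y + riemann (-1) t y * riemann_dt (-1) t y))); [|ring].
apply (is_derive_plusR (fun s => riemann 1 s y * riemann 1 s y)
                       (fun s => riemann (-1) s y * riemann (-1) s y));
  [apply (is_derive_multR (fun s => riemann 1 s y) (fun s => riemann 1 s y))
  |apply (is_derive_multR (fun s => riemann (-1) s y) (fun s => riemann (-1) s y))];
  apply riemann_is_derive_t; auto.
Qed.

Lemma energy_Derive_t_cont t x : 0 < t ->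
  continuity_2d_pt (fun s y => Derive (fun z => energy z y) s) t x.
Proof.
intros Ht. apply (continuity_2d_Derive_t energy energy_dt); auto.
- intros; apply energy_is_derive_t; auto.
- unfold energy_dt.
  repeat first [ apply riemann_cont | apply riemann_dt_cont | apply continuity_2d_pt_const
    | apply continuity_2d_pt_plus | apply continuity_2d_pt_mult ].
Qed.

Lemma energy_interval_derive a0 b0 s t : 0 < t ->
  is_derive (fun tau => RInt (energy tau) (a0 + s * tau) (b0 - s * tau)) t
    (RInt (fun y => Derive (fun z => energy z y) t) (a0 + s * t) (b0 - s * t)
     + - energy t (a0 + s * t) * s + energy t (b0 - s * t) * (- s)).
Proof.
intros Ht.
assert (Hex : forall a b, locally t (fun tau => ex_RInt (energy tau) a b))
  by (intros; apply locally_pos; auto;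
      intros; apply ex_RInt_cont; intros; apply energy_slice_cont; lra).
apply (is_derive_RInt_param_bound_comp energy (fun tau => a0 + s * tau) (fun tau => b0 - s * tau));
  try (exists (mkposreal 1 Rlt_0_1); apply Hex); try apply Hex.
- auto_derive; auto; ring.
- auto_derive; auto; ring.
- exists (mkposreal 1 Rlt_0_1). apply locally_pos; auto.
  intros y Hy z _. exists (energy_dt y z). apply energy_is_derive_t; auto.
- intros; apply energy_Derive_t_cont; auto.
- apply locally_2d_pos; auto. intros; apply energy_Derive_t_cont; auto.
- apply locally_2d_pos; auto. intros; apply energy_Derive_t_cont; auto.
- apply energy_slice_cont; lra.
- apply energy_slice_cont; lra.
Qed.

Lemma flux_integral e t a b : 0 <= t ->
  RInt (fun y => - (2 * (char_speed e t y * riemann_dx e t y) * riemann e t y)) a b =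
  RInt (fun y => char_speed_dx e t y * (riemann e t y * riemann e t y)) a b
  - (char_speed e t b * (riemann e t b * riemann e t b)
     - char_speed e t a * (riemann e t a * riemann e t a)).
Proof.
intros Ht.
set (D := fun y => char_speed_dx e t y * (riemann e t y * riemann e t y)
  + char_speed e t y * (riemann_dx e t y * riemann e t y + riemann e t y * riemann_dx e t y)).
rewrite <- (RInt_primitive (fun y => char_speed e t y * (riemann e t y * riemann e t y)) D).
- rewrite <- RInt_minusR by (apply ex_RInt_cont; intros; try unfold D; cont_slice).
  apply RInt_extR. intros x _. unfold D. ring.
- intros y _.
  apply (is_derive_multR (fun y => char_speed e t y) (fun y => riemann e t y * riemann e t y));
    [apply char_speed_is_derive_x; auto|].
  apply (is_derive_multR (fun y => riemann e t y) (fun y => riemann e t y));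
    apply riemann_is_derive_x; auto.
- intros y. unfold D. cont_slice.
Qed.

(* While both characteristic speeds stay below the speed [s] of the moving endpoints,
   no energy enters the interval, and [|lambda_x| <= 1] bounds the internal growth. *)
Lemma energy_interval_growth a b t s : 0 < t -> a <= b ->
  (forall e y, e * e = 1 -> a <= y <= b ->
     Rabs (char_speed_dx e t y) <= 1 /\ Rabs (char_speed e t y) <= s) ->
  RInt (fun y => Derive (fun z => energy z y) t) a b + - energy t a * s + energy t b * (- s)
  <= RInt (energy t) a b.
Proof.
intros Ht Hab Hbd.
assert (Hp : 1 * 1 = 1) by ring. assert (Hm : -1 * -1 = 1) by ring.
rewrite (RInt_extR _ (fun y => - (2 * (char_speed 1 t y * riemann_dx 1 t y) * riemann 1 t y)
  + - (2 * (char_speed (-1) t y * riemann_dx (-1) t y) * riemann (-1) t y))).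
2:{ intros y _. transitivity (energy_dt t y); [apply is_derive_unique, energy_is_derive_t; auto|].
    unfold energy_dt. rewrite !riemann_transport by auto. ring. }
assert (Hsplit : RInt (energy t) a b = RInt (fun y => riemann 1 t y * riemann 1 t y) a b
  + RInt (fun y => riemann (-1) t y * riemann (-1) t y) a b)
  by (apply RInt_plusR; apply ex_RInt_cont; intros; cont_slice).
rewrite RInt_plusR, !flux_integral, Hsplit by (lra || apply ex_RInt_cont; intros; cont_slice).
assert (Hint : forall e, e * e = 1 ->
  RInt (fun y => char_speed_dx e t y * (riemann e t y * riemann e t y)) a b
  <= RInt (fun y => riemann e t y * riemann e t y) a b).
{ intros e He. apply RInt_le; auto; try (apply ex_RInt_cont; intros; cont_slice).
  intros y Hy. destruct (Hbd e y He ltac:(lra)) as [Hl _]. apply Rabs_le_between in Hl.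
  assert (0 <= riemann e t y * riemann e t y) by nra. nra. }
assert (Hend : forall e y, e * e = 1 -> a <= y <= b ->
  - s * (riemann e t y * riemann e t y) <= char_speed e t y * (riemann e t y * riemann e t y)
  <= s * (riemann e t y * riemann e t y)).
{ intros e y He Hy. destruct (Hbd e y He Hy) as [_ Hl]. apply Rabs_le_between in Hl.
  assert (0 <= riemann e t y * riemann e t y) by nra. split; nra. }
assert (I1 := Hint 1 Hp). assert (I2 := Hint (-1) Hm).
assert (E1 := Hend 1 a Hp ltac:(lra)). assert (E2 := Hend (-1) a Hm ltac:(lra)).
assert (E3 := Hend 1 b Hp ltac:(lra)). assert (E4 := Hend (-1) b Hm ltac:(lra)).
unfold energy. lra.
Qed.


Lemma rest_state_values tau a b y e : a < y < b ->
  (forall z, a < z < b -> rho tau z = rhobar /\ u tau z = 0) ->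
  char_speed e tau y = e * sigma /\ char_speed_dx e tau y = 0 /\ energy tau y = 0.
Proof.
intros Hy Hc. destruct (Hc y Hy) as [H1 H2].
assert (Hx1 : dx rho tau y = 0) by (apply (dx_locally_const rho tau y rhobar a b); auto; apply Hc).
assert (Hx2 : dx u tau y = 0) by (apply (dx_locally_const u tau y 0 a b); auto; apply Hc).
unfold energy, riemann, char_speed, char_speed_dx. rewrite H1, H2, Hx1, Hx2.
repeat split; ring.
Qed.

Lemma rest_of_energy_zero t y : 0 <= t -> energy t y = 0 -> rho t y = rhobar /\ u t y = 0.
Proof.
intros Ht H. unfold energy in H.
assert (H1 : riemann 1 t y = 0) by nra. assert (H2 : riemann (-1) t y = 0) by nra.
unfold riemann in H1, H2.
assert (Hu : u t y = 0) by lra. split; auto.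
apply (sound_integral_inj K gamma); auto. lra.
Qed.

Definition at_rest_trapezoid a0 b0 s tau := forall t x, 0 <= t <= tau ->
  a0 + s * t < x < b0 - s * t -> rho t x = rhobar /\ u t x = 0.

Lemma at_rest_trapezoid_closed a0 b0 s tau : 0 < s -> 0 < tau ->
  (forall t, 0 <= t < tau -> at_rest_trapezoid a0 b0 s t) -> at_rest_trapezoid a0 b0 s tau.
Proof.
intros Hs Ht HP t x Ht2 Hx.
destruct (Rle_lt_or_eq_dec t tau (proj2 Ht2)) as [Hl|<-]; [apply (HP t); auto; lra|].
assert (Hbefore : forall s', 0 < s' < t -> rho s' x = rhobar /\ u s' x = 0)
  by (intros s' Hs'; apply (HP s'); [lra | lra | nra]).
split.
- apply (continuity_left_const rho t 0 x rhobar); [lra | apply cont_half_continuity_2d; auto |].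
  intros; apply Hbefore; auto.
- apply (continuity_left_const u t 0 x 0); [lra | apply cont_half_continuity_2d; auto |].
  intros; apply Hbefore; auto.
Qed.

(* Near a time [tau] at which the trapezoid is at rest, continuity makes the
   characteristic speeds close to [+- sigma < s], so the energy of the trapezoid
   satisfies [E' <= E] with [E -> 0] as [t -> tau+], and Gronwall keeps it zero. *)
Lemma at_rest_trapezoid_extend a0 b0 s tau : sigma < s -> 0 <= tau ->
  a0 + s * tau < b0 - s * tau -> at_rest_trapezoid a0 b0 s tau ->
  exists d, 0 < d /\ at_rest_trapezoid a0 b0 s (tau + d).
Proof.
intros Hs Htau Hab HP.
assert (Hsig := sigma_pos).
set (alpha := a0 + s * tau) in *. set (beta := b0 - s * tau) in *.
assert (Hrest : forall z, alpha < z < beta -> rho tau z = rhobar /\ u tau z = 0)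
  by (intros; apply (HP tau); auto; lra).
assert (He0 : 0 < Rmin 1 (s - sigma)) by (apply Rmin_pos; lra).
assert (Rmin 1 (s - sigma) <= 1) by apply Rmin_l.
assert (Rmin 1 (s - sigma) <= s - sigma) by apply Rmin_r.
destruct (uniform_continuity_near (char_speed 1) alpha beta tau _
  (char_speed_cont 1) Htau He0) as [d1 [Hd1 U1]].
destruct (uniform_continuity_near (char_speed (-1)) alpha beta tau _
  (char_speed_cont (-1)) Htau He0) as [d2 [Hd2 U2]].
destruct (uniform_continuity_near (char_speed_dx 1) alpha beta tau _
  (char_speed_dx_cont 1) Htau He0) as [d3 [Hd3 U3]].
destruct (uniform_continuity_near (char_speed_dx (-1)) alpha beta tau _
  (char_speed_dx_cont (-1)) Htau He0) as [d4 [Hd4 U4]].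
set (d := Rmin (Rmin d1 d2) (Rmin (Rmin d3 d4) ((beta - alpha) / (2 * s)))).
assert (Hd : 0 < d) by (unfold d; repeat apply Rmin_pos; try apply Rdiv_lt_0_compat; lra).
assert (d <= d1) by (unfold d; apply Rle_trans with (Rmin d1 d2); apply Rmin_l).
assert (d <= d2) by (unfold d; apply Rle_trans with (Rmin d1 d2); [apply Rmin_l | apply Rmin_r]).
assert (H34 : d <= Rmin d3 d4) by (unfold d; eapply Rle_trans; [apply Rmin_r | apply Rmin_l]).
assert (d <= d3) by (apply Rle_trans with (Rmin d3 d4); [exact H34 | apply Rmin_l]).
assert (d <= d4) by (apply Rle_trans with (Rmin d3 d4); [exact H34 | apply Rmin_r]).
assert (d <= (beta - alpha) / (2 * s)) by (unfold d; eapply Rle_trans; apply Rmin_r).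
assert (Hds : 2 * s * d <= beta - alpha).
{ replace (beta - alpha) with (2 * s * ((beta - alpha) / (2 * s))) by (field; lra).
  apply Rmult_le_compat_l; lra. }
assert (Hin : forall t y, tau < t < tau + d -> a0 + s * t <= y <= b0 - s * t -> alpha < y < beta)
  by (intros; unfold alpha, beta; split; nra).
assert (Hlen : forall t, tau < t < tau + d -> a0 + s * t <= b0 - s * t)
  by (intros; unfold alpha, beta in *; nra).
set (E := fun t => RInt (energy t) (a0 + s * t) (b0 - s * t)).
assert (HE0 : forall t, tau < t < tau + d -> E t <= 0).
{ apply (gronwall_vanishing E (fun t => RInt (fun y => Derive (fun z => energy z y) t)
    (a0 + s * t) (b0 - s * t) + - energy t (a0 + s * t) * s + energy t (b0 - s * t) * (- s))
    tau (tau + d)).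
  - intros t Ht. apply energy_interval_derive. lra.
  - intros t Ht. apply energy_interval_growth; [lra | auto |].
    intros e y He Hy. assert (Hy' := Hin t y Ht Hy).
    destruct (rest_state_values tau alpha beta y e Hy' Hrest) as [HL [HLx _]].
    destruct (sign_cases e He) as [-> | ->].
    + assert (V1 := U1 t y ltac:(lra) ltac:(lra)). assert (V3 := U3 t y ltac:(lra) ltac:(lra)).
      rewrite HL in V1. rewrite HLx, Rminus_0_r in V3.
      apply Rabs_def2 in V1. split; [lra | apply Rabs_le; lra].
    + assert (V2 := U2 t y ltac:(lra) ltac:(lra)). assert (V4 := U4 t y ltac:(lra) ltac:(lra)).
      rewrite HL in V2. rewrite HLx, Rminus_0_r in V4.
      apply Rabs_def2 in V2. split; [lra | apply Rabs_le; lra].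
  - intros eta Heta.
    assert (Hq : 0 < eta / (beta - alpha + 1)) by (apply Rdiv_lt_0_compat; lra).
    destruct (uniform_continuity_near energy alpha beta tau _ energy_cont Htau Hq) as [d5 [Hd5 U5]].
    exists (Rmin d5 d). split; [apply Rmin_pos; lra|].
    intros t Ht. assert (Rmin d5 d <= d5) by apply Rmin_l. assert (Rmin d5 d <= d) by apply Rmin_r.
    apply Rle_trans with (RInt (fun _ => eta / (beta - alpha + 1)) (a0 + s * t) (b0 - s * t)).
    + apply RInt_le; [apply Hlen; lra | apply ex_RInt_cont; intros; apply energy_slice_cont; lra
        | apply ex_RInt_cont; intros; apply continuity_pt_constR |].
      intros y Hy. assert (Hy' := Hin t y ltac:(lra) ltac:(lra)).
      destruct (rest_state_values tau alpha beta y 1 Hy' Hrest) as [_ [_ Hz]].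
      assert (V5 := U5 t y ltac:(lra) ltac:(lra)). rewrite Hz, Rminus_0_r in V5.
      apply Rabs_def2 in V5. lra.
    + rewrite RInt_constR.
      apply Rle_trans with ((beta - alpha + 1) * (eta / (beta - alpha + 1))); [|right; field; lra].
      apply Rmult_le_compat_r; [lra|]. unfold alpha, beta. nra. }
exists (d / 2). split; [lra|].
intros t x Ht Hx.
destruct (Rle_or_lt t tau) as [Hle|Hlt]; [apply (HP t x); auto; lra|].
apply rest_of_energy_zero; [lra|].
apply (RInt_nonneg_eq0_pt (energy t) (a0 + s * t) (b0 - s * t)); auto.
- intros; apply energy_slice_cont; lra.
- intros; apply energy_nonneg.
- apply Rle_antisym; [apply HE0; lra|].
  apply RInt_ge_0; [apply Hlen; lra | apply ex_RInt_cont; intros; apply energy_slice_cont; lra |].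
  intros; apply energy_nonneg.
Qed.

Lemma at_rest_trapezoid_all a0 b0 s : sigma < s ->
  (forall x, a0 < x < b0 -> rho 0 x = rhobar /\ u 0 x = 0) ->
  forall t x, 0 <= t -> a0 + s * t < x < b0 - s * t -> rho t x = rhobar /\ u t x = 0.
Proof.
intros Hs Hi t x Ht Hx.
assert (Hsig := sigma_pos).
apply (continuous_induction (at_rest_trapezoid a0 b0 s) t Ht); [| | | | lra | exact Hx].
- intros t1 t2 H12 H y z Hy Hz. apply H; auto. lra.
- intros y z Hy Hz. replace y with 0 in * by lra. apply Hi. lra.
- intros; apply at_rest_trapezoid_closed; auto; lra.
- intros tau Htau HP. apply at_rest_trapezoid_extend; auto; [lra | nra].
Qed.

Lemma finite_propagation t x : 0 <= t -> Rad + sigma * t < Rabs x ->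
  rho t x = rhobar /\ u t x = 0.
Proof.
intros Ht Hx.
assert (Hsig := sigma_pos).
set (q := (Rabs x - Rad - sigma * t) / (2 * (t + 1))).
assert (Hq : 0 < q) by (unfold q; apply Rdiv_lt_0_compat; lra).
assert (Hqt : q * t < Rabs x - Rad - sigma * t).
{ unfold q. apply (Rmult_lt_reg_r (2 * (t + 1))); [lra|].
  replace ((Rabs x - Rad - sigma * t) / (2 * (t + 1)) * t * (2 * (t + 1)))
    with ((Rabs x - Rad - sigma * t) * t) by (field; lra).
  nra. }
assert (0 <= (sigma + q) * t) by (apply Rmult_le_pos; lra).
destruct (Rle_or_lt 0 x) as [Hx0|Hx0].
- rewrite Rabs_right in Hqt, Hx by lra.
  apply (at_rest_trapezoid_all Rad (x + (sigma + q) * t + 1) (sigma + q)); auto; [lra | | lra].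
  intros z Hz. apply Hinit. rewrite Rabs_right; lra.
- rewrite Rabs_left in Hqt, Hx by lra.
  apply (at_rest_trapezoid_all (x - (sigma + q) * t - 1) (- Rad) (sigma + q)); auto; [lra | | lra].
  intros z Hz. apply Hinit. rewrite Rabs_left; lra.
Qed.


(** * The functionals [H_4] and [m_2] *)

Definition H4 t := RInt_gen (fun x => x * u t x) (Rbar_locally m_infty) (Rbar_locally p_infty).
Definition m2 t := RInt_gen (fun x => rho t x - rhobar) (Rbar_locally m_infty) (Rbar_locally p_infty).

(* All integrands below vanish outside [|x| <= Rad + sigma t], so on [[-L, L]] with
   [L := window t] they capture the whole integral. *)
Definition window t := Rad + sigma * t + 1.
Definition kinetic t := RInt (fun y => u t y * u t y) (- window t) (window t).
Definition H4_rate_density t y :=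
  u t y * u t y / 2 + (enthalpy K gamma (rho t y) - enthalpy K gamma rhobar).
Definition H4_rate t := RInt (H4_rate_density t) (- window t) (window t).

Lemma window_lt t : Rad + sigma * t < window t.
Proof. unfold window. lra. Qed.

Lemma rest_at_window t L : 0 <= t -> Rad + sigma * t < L ->
  (rho t L = rhobar /\ u t L = 0) /\ (rho t (- L) = rhobar /\ u t (- L) = 0).
Proof.
intros Ht HL. assert (0 <= sigma * t) by (apply sigma_mul_nonneg; lra).
split; apply finite_propagation; auto; [rewrite Rabs_right | rewrite Rabs_left]; lra.
Qed.

Lemma integral_on_window (f : R -> R) t L : 0 <= t -> Rad + sigma * t < L ->
  (forall y, continuity_pt f y) -> (forall y, rho t y = rhobar -> u t y = 0 -> f y = 0) ->
  RInt_gen f (Rbar_locally m_infty) (Rbar_locally p_infty) = RInt f (- L) L.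
Proof.
intros Ht HL Hc Hz. assert (0 <= sigma * t) by (apply sigma_mul_nonneg; lra).
apply RInt_gen_compact_support; [lra | auto |].
intros y Hy. destruct (finite_propagation t y Ht ltac:(lra)). auto.
Qed.

Lemma H4_window t L : 0 <= t -> Rad + sigma * t < L -> H4 t = RInt (fun x => x * u t x) (- L) L.
Proof.
intros Ht HL. apply (integral_on_window (fun x => x * u t x) t L Ht HL);
  [intros; cont_slice | intros y _ ->; ring].
Qed.

Lemma m2_window t L : 0 <= t -> Rad + sigma * t < L -> m2 t = RInt (fun x => rho t x - rhobar) (- L) L.
Proof.
intros Ht HL. apply (integral_on_window (fun x => rho t x - rhobar) t L Ht HL);
  [intros; cont_slice | intros y -> _; ring].
Qed.

(* [x u_t = - x (u^2/2 + h(rho))_x] by the momentum equation; integrating by parts on a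
   window whose ends are at rest turns [int x u_t] into [int (u^2/2 + h(rho) - h(rhobar))]. *)
Lemma H4_window_derive L t : 0 < t -> Rad + sigma * t < L ->
  is_derive (fun s => RInt (fun y => y * u s y) (- L) L) t (RInt (H4_rate_density t) (- L) L).
Proof.
intros Ht HLt.
apply (is_derive_val _ _ (RInt (fun y => Derive (fun z => y * u z y) t) (- L) L)).
{ apply (is_derive_RInt_param (fun s y => y * u s y)).
  - apply locally_pos; auto. intros s Hs y _. exists (y * ut s y). apply is_derive_scalR, u_dt; auto.
  - intros y _. apply (continuity_2d_Derive_t (fun s y => y * u s y) (fun s y => y * ut s y)); auto.
    + intros s z Hs. apply is_derive_scalR, u_dt; auto.
    + cont_2d.
  - apply locally_pos; auto. intros s Hs. apply ex_RInt_cont. intros; cont_slice. }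
rewrite (RInt_extR _ (fun y => y * ut t y))
  by (intros y _; apply is_derive_unique, is_derive_scalR, u_dt; auto).
set (Phi := H4_rate_density t).
set (D := fun y => Phi y + y * (u t y * dx u t y
  + c (rho t y) * c (rho t y) / rho t y * dx rho t y)).
assert (HDz : RInt D (- L) L = 0).
{ rewrite (RInt_primitive (fun y => y * Phi y) D).
  - destruct (rest_at_window t L) as [[H1 H2] [H3 H4]]; try lra.
    unfold Phi, H4_rate_density. rewrite H1, H2, H3, H4. lra.
  - intros y _. unfold D, Phi, H4_rate_density.
    apply (is_derive_val _ _ (1 * Phi y + y * ((u t y * dx u t y + dx u t y * u t y) / 2
      + (c (rho t y) * c (rho t y) / rho t y * dx rho t y - 0)))).
    + apply (is_derive_multR (fun y => y) (fun y => u t y * u t y / 2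
        + (enthalpy K gamma (rho t y) - enthalpy K gamma rhobar))); [apply is_derive_idR|].
      apply is_derive_plusR.
      * apply (is_derive_val _ _ ((dx u t y * u t y + u t y * dx u t y) * / 2 + u t y * u t y * 0));
          [|field].
        apply (is_derive_multR (fun y => u t y * u t y) (fun _ => / 2)); [|apply is_derive_constR].
        apply (is_derive_multR (fun y => u t y) (fun y => u t y)); apply u_dx; lra.
      * apply is_derive_minusR; [|apply is_derive_constR].
        apply (comp_rho_dx (enthalpy K gamma) (fun r => c r * c r / r)); [lra|].
        intros; apply enthalpy_derive; auto.
    + unfold Phi, H4_rate_density. field. apply Rgt_not_eq, Hpos. lra.
  - intros y. unfold D, Phi, H4_rate_density. cont_slice. }
assert (Hm : forall y, y * ut t y = Phi y - D y).
{ intros y. unfold D.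
  assert (Hmo := momentum_eq t y Ht). assert (Hr : 0 < rho t y) by (apply Hpos; lra).
  replace (ut t y) with (- (u t y * dx u t y) - c (rho t y) * c (rho t y) / rho t y * dx rho t y).
  - ring.
  - apply (Rmult_eq_reg_l (rho t y)); [|lra]. field_simplify; lra. }
rewrite (RInt_extR _ (fun y => Phi y - D y)) by (intros; apply Hm).
rewrite RInt_minusR, HDz; [ring | |]; apply ex_RInt_cont; intros; unfold D, Phi, H4_rate_density;
  cont_slice.
Qed.

Lemma m2_window_derive L t : 0 < t -> Rad + sigma * t < L ->
  is_derive (fun s => RInt (fun y => rho s y - rhobar) (- L) L) t 0.
Proof.
intros Ht HLt.
apply (is_derive_val _ _ (RInt (fun y => Derive (fun z => rho z y - rhobar) t) (- L) L)).
{ apply (is_derive_RInt_param (fun s y => rho s y - rhobar)).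
  - apply locally_pos; auto. intros s Hs y _. exists (rt s y - 0).
    apply is_derive_minusR; [apply rho_dt; auto | apply is_derive_constR].
  - intros y _.
    apply (continuity_2d_Derive_t (fun s y => rho s y - rhobar) (fun s y => rt s y - 0)); auto.
    + intros s z Hs. apply is_derive_minusR; [apply rho_dt; auto | apply is_derive_constR].
    + cont_2d.
  - apply locally_pos; auto. intros s Hs. apply ex_RInt_cont. intros; cont_slice. }
rewrite (RInt_extR _ (fun y => -1 * (dx rho t y * u t y + rho t y * dx u t y))).
2:{ intros y _. transitivity (rt t y - 0).
    - apply is_derive_unique, is_derive_minusR; [apply rho_dt; auto | apply is_derive_constR].
    - assert (Hm := mass_eq t y Ht). lra. }
rewrite RInt_scalR by (apply ex_RInt_cont; intros; cont_slice).
rewrite (RInt_primitive (fun y => rho t y * u t y)).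
- destruct (rest_at_window t L) as [[_ H2] [_ H4]]; try lra. rewrite H2, H4. ring.
- intros y _. apply (is_derive_multR (fun y => rho t y) (fun y => u t y));
    [apply rho_dx | apply u_dx]; lra.
- intros; cont_slice.
Qed.

Lemma window_locally t (P : R -> Prop) : 0 < t ->
  (forall s, 0 < s -> Rad + sigma * s < window t -> P s) -> locally t P.
Proof.
intros Ht HP. assert (Hsig := sigma_pos).
assert (Hr : 0 < Rmin t (/ sigma)) by (apply Rmin_pos; [lra | apply Rinv_0_lt_compat; lra]).
exists (mkposreal _ Hr). intros s Hs. change (Rabs (s - t) < Rmin t (/ sigma)) in Hs.
assert (Rmin t (/ sigma) <= t) by apply Rmin_l. assert (Rmin t (/ sigma) <= / sigma) by apply Rmin_r.
apply Rabs_def2 in Hs. apply HP; [lra|].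
assert (sigma * (s - t) < sigma * / sigma) by (apply Rmult_lt_compat_l; lra).
rewrite Rinv_r in * by lra. unfold window. lra.
Qed.

Lemma H4_derive t : 0 < t -> is_derive H4 t (H4_rate t).
Proof.
intros Ht. apply (is_derive_ext_loc (fun s => RInt (fun y => y * u s y) (- window t) (window t))).
- apply window_locally; auto. intros s Hs HL. symmetry. apply H4_window; auto; lra.
- apply H4_window_derive; auto using window_lt.
Qed.

Lemma m2_derive t : 0 < t -> is_derive m2 t 0.
Proof.
intros Ht.
apply (is_derive_ext_loc (fun s => RInt (fun y => rho s y - rhobar) (- window t) (window t))).
- apply window_locally; auto. intros s Hs HL. symmetry. apply m2_window; auto; lra.
- apply m2_window_derive; auto using window_lt.
Qed.

Lemma window_right_cont (F : R -> R) (f : R -> R -> R) :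
  (forall t x, continuity_2d_pt (fun s y => f (Rmax 0 s) y) t x) ->
  (forall t L, 0 <= t -> Rad + sigma * t < L -> F t = RInt (f t) (- L) L) ->
  right_continuous_at F 0.
Proof.
intros Hf HF eps Heps. assert (Hsig := sigma_pos).
destruct (RInt_right_cont f (- window 1) (window 1) 0) with (eps := eps) as [d [Hd Hn]];
  auto; try lra; [unfold window; lra |].
exists (Rmin d 1). split; [apply Rmin_pos; lra|].
intros t Ht. assert (Rmin d 1 <= d) by apply Rmin_l. assert (Rmin d 1 <= 1) by apply Rmin_r.
assert (sigma * t <= sigma * 1) by (apply Rmult_le_compat_l; lra).
rewrite (HF t (window 1)), (HF 0 (window 1)); try (unfold window; lra).
apply Hn. lra.
Qed.

Lemma H4_right_cont : right_continuous_at H4 0.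
Proof.
apply (window_right_cont H4 (fun s y => y * u s y)); [intros; cont_2d|].
intros; apply H4_window; auto.
Qed.

Lemma m2_const t : 0 <= t -> m2 t = m2 0.
Proof.
apply derive_zero_const_right_cont; [apply m2_derive|].
apply (window_right_cont m2 (fun s y => rho s y - rhobar)); [intros; cont_2d|].
intros; apply m2_window; auto.
Qed.

Lemma H4_rate_ge t : 0 <= t -> m2 0 >= 0 -> kinetic t / 2 <= H4_rate t.
Proof.
intros Ht Hm. unfold H4_rate, kinetic, H4_rate_density.
assert (HW := window_lt t). assert (0 <= sigma * t) by (apply sigma_mul_nonneg; lra).
assert (Hm2 : 0 <= RInt (fun y => rho t y - rhobar) (- window t) (window t))
  by (rewrite <- m2_window, m2_const by auto; lra).
rewrite RInt_plusR by (apply ex_RInt_cont; intros; cont_slice).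
rewrite (RInt_extR (fun y => u t y * u t y / 2) (fun y => / 2 * (u t y * u t y))) by (intros; field).
rewrite RInt_scalR by (apply ex_RInt_cont; intros; cont_slice).
assert (Hh : RInt (fun y => sigma * sigma / rhobar * (rho t y - rhobar)) (- window t) (window t)
   <= RInt (fun y => enthalpy K gamma (rho t y) - enthalpy K gamma rhobar) (- window t) (window t)).
{ apply RInt_le; try lra; try (apply ex_RInt_cont; intros; cont_slice).
  intros y _. apply enthalpy_convex; auto. }
rewrite RInt_scalR in Hh by (apply ex_RInt_cont; intros; cont_slice).
assert (0 <= sigma * sigma / rhobar) by (apply Rdiv_le_0_compat; nra).
assert (0 <= sigma * sigma / rhobar * RInt (fun y => rho t y - rhobar) (- window t) (window t))
  by (apply Rmult_le_pos; auto).
lra.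
Qed.

Lemma H4_cauchy_schwarz t : 0 <= t -> H4 t ^ 2 <= 2 * (Rad + sigma * t) ^ 3 / 3 * kinetic t.
Proof.
intros Ht. assert (0 <= sigma * t) by (apply sigma_mul_nonneg; lra).
assert (HW := window_lt t). unfold kinetic. rewrite (H4_window t (window t)) by auto.
apply (moment_cauchy_schwarz (u t)); [lra | intros; cont_slice |].
intros y Hy. apply (finite_propagation t y); auto.
Qed.

Lemma kinetic_nonneg t : 0 <= t -> 0 <= kinetic t.
Proof.
intros Ht. assert (HW := window_lt t). assert (0 <= sigma * t) by (apply sigma_mul_nonneg; lra).
apply RInt_ge_0; [lra | apply ex_RInt_cont; intros; cont_slice | intros; nra].
Qed.

Lemma euler_no_global_solution : H4 0 > 8 * sigma * Rad ^ 2 / 3 -> m2 0 >= 0 -> False.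
Proof.
intros HH0 Hm0. assert (Hsig := sigma_pos).
assert (Hrate : forall t, 0 <= t -> kinetic t / 2 <= H4_rate t) by (intros; apply H4_rate_ge; auto).
apply (riccati_no_global_solution H4 H4_rate sigma Rad (H4 0)); auto; [lra | apply H4_derive | |].
- intros t Ht. apply (derive_nonneg_le_right_cont H4 H4_rate 0 H4_derive); [| apply H4_right_cont | lra].
  intros s Hs. assert (0 <= kinetic s) by (apply kinetic_nonneg; lra).
  assert (kinetic s / 2 <= H4_rate s) by (apply Hrate; lra). lra.
- intros t Ht. assert (Hcs := H4_cauchy_schwarz t ltac:(lra)). assert (Hk := Hrate t ltac:(lra)).
  assert (0 < (Rad + sigma * t) ^ 3) by (apply pow_lt; nra).
  nra.
Qed.

End EulerSolution.

Theorem theorem8 (K gamma rhobar Rad : R) (rho u : R -> R -> R) :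
  0 < K -> 2 <= gamma -> 0 < rhobar -> 0 < Rad ->
  (* initial perturbation (rho_0, u_0) supported in |x| <= R *)
  (forall x, Rad < Rabs x -> rho 0 x = rhobar /\ u 0 x = 0) ->
  (* H_4(0) > 8 sigma R^2 / 3 with sigma = sqrt (K gamma rhobar^(gamma-1)) *)
  RInt_gen (fun x => x * u 0 x) (Rbar_locally m_infty) (Rbar_locally p_infty)
    > 8 * sqrt (K * gamma * Rpower rhobar (gamma - 1)) * Rad ^ 2 / 3 ->
  (* m_2(0) >= 0 *)
  RInt_gen (fun x => rho 0 x - rhobar) (Rbar_locally m_infty) (Rbar_locally p_infty)
    >= 0 ->
  (* then no C^1 solution exists for all t >= 0, i.e. the life span is finite *)
  ~ global_C1_euler_solution K gamma rho u.
Proof.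
intros HK Hg Hrb HR Hinit HH0 Hm0
  [[Hr_dx [Hr_dt [Hr_c [Hr_dxc [rt [Hrt_eq Hrt_c]]]]]]
   [[Hu_dx [Hu_dt [Hu_c [Hu_dxc [ut [Hut_eq Hut_c]]]]]] [Hpos [Hmass Hmom]]]].
rewrite <- sound_sqrt in HH0 by lra.
exact (euler_no_global_solution K gamma rhobar Rad rho u rt ut HK Hg Hrb HR Hr_dx Hr_dt Hr_c
  Hr_dxc Hrt_eq Hrt_c Hu_dx Hu_dt Hu_c Hu_dxc Hut_eq Hut_c Hpos Hmass Hmom Hinit HH0 Hm0).
Qed.
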